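(* In the algebra $\mathcal O_q$ defined in the context, the following relations hold: $[\mathcal W_0,\tilde{\mathcal G}_1]=[\mathcal W_0,[\mathcal W_0,\mathcal W_1]_q]$ and $[\tilde{\mathcal G}_1,\mathcal W_1]=[[\mathcal W_0,\mathcal W_1]_q,\mathcal W_1]$.
   Context: All algebras are associative and unital over a field $\mathbb F$; $q\in\mathbb F$ is nonzero and not a root of unity. For elements $X,Y$ of an algebra, $[X,Y]=XY-YX$ and $[X,Y]_q=qXY-q^{-1}YX$. Let $\rho=-(q^2-q^{-2})^2$. The algebra $\mathcal O_q$ is defined by generators $\mathcal W_{-k},\mathcal W_{k+1},\mathcal G_{k+1},\tilde{\mathcal G}_{k+1}$ ($k\in\mathbb N$) and the following relations for all $k,\ell\in\mathbb N$: $[\mathcal W_0,\mathcal W_{k+1}]=[\mathcal W_{-k},\mathcal W_1]=(\tilde{\mathcal G}_{k+1}-\mathcal G_{k+1})/(q+q^{-1})$; $[\mathcal W_0,\mathcal G_{k+1}]_q=[\tilde{\mathcal G}_{k+1},\mathcal W_0]_q=\rho\mathcal W_{-k-1}-\rho\mathcal W_{k+1}$; $[\mathcal G_{k+1},\mathcal W_1]_q=[\mathcal W_1,\tilde{\mathcal G}_{k+1}]_q=\rho\mathcal W_{k+2}-\rho\mathcal W_{-k}$; $[\mathcal W_{-k},\mathcal W_{-\ell}]=0$, $[\mathcal W_{k+1},\mathcal W_{\ell+1}]=0$; $[\mathcal W_{-k},\mathcal W_{\ell+1}]+[\mathcal W_{k+1},\mathcal W_{-\ell}]=0$; $[\mathcal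 W_{-k},\mathcal G_{\ell+1}]+[\mathcal G_{k+1},\mathcal W_{-\ell}]=0$; $[\mathcal W_{-k},\tilde{\mathcal G}_{\ell+1}]+[\tilde{\mathcal G}_{k+1},\mathcal W_{-\ell}]=0$; $[\mathcal W_{k+1},\mathcal G_{\ell+1}]+[\mathcal G_{k+1},\mathcal W_{\ell+1}]=0$; $[\mathcal W_{k+1},\tilde{\mathcal G}_{\ell+1}]+[\tilde{\mathcal G}_{k+1},\mathcal W_{\ell+1}]=0$; $[\mathcal G_{k+1},\mathcal G_{\ell+1}]=0$, $[\tilde{\mathcal G}_{k+1},\tilde{\mathcal G}_{\ell+1}]=0$; $[\tilde{\mathcal G}_{k+1},\mathcal G_{\ell+1}]+[\mathcal G_{k+1},\tilde{\mathcal G}_{\ell+1}]=0$. *)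

From HB Require Import structures.
From mathcomp Require Import all_boot all_order all_algebra.
Set Implicit Arguments. Unset Strict Implicit. Unset Printing Implicit Defensive.
Import GRing.Theory.
Local Open Scope ring_scope.

Definition comm (R : pzRingType) (X Y : R) : R := X * Y - Y * X.

Definition qcomm (F : fieldType) (A : algType F) (q : F) (X Y : A) : A :=
  q *: (X * Y) - q^-1 *: (Y * X).

Definition rho (F : fieldType) (q : F) : F := - (q ^+ 2 - q ^- 2) ^+ 2.

(* Defining relations of O_q, for a family of elements of an F-algebra A:
   Wm k = W_{-k}, Wp k = W_{k+1}, G k = G_{k+1}, Gt k = tilde G_{k+1}. *)
Definition Oq_relations (F : fieldType) (q : F) (A : algType F)
    (Wm Wp G Gt : nat -> A) : Prop :=
  (forall k, comm (Wm 0%N) (Wp k) = (q + q^-1)^-1 *: (Gt k - G k)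
              /\ comm (Wm k) (Wp 0%N) = (q + q^-1)^-1 *: (Gt k - G k)) /\
      (forall k, qcomm q (Wm 0%N) (G k) = rho q *: Wm k.+1 - rho q *: Wp k
              /\ qcomm q (Gt k) (Wm 0%N) = rho q *: Wm k.+1 - rho q *: Wp k) /\
      (forall k, qcomm q (G k) (Wp 0%N) = rho q *: Wp k.+1 - rho q *: Wm k
              /\ qcomm q (Wp 0%N) (Gt k) = rho q *: Wp k.+1 - rho q *: Wm k) /\
      (forall k l, comm (Wm k) (Wm l) = 0 /\ comm (Wp k) (Wp l) = 0) /\
      (forall k l, comm (Wm k) (Wp l) + comm (Wp k) (Wm l) = 0) /\
      (forall k l, comm (Wm k) (G l) + comm (G k) (Wm l) = 0
                /\ comm (Wm k) (Gt l) + comm (Gt k) (Wm l) = 0) /\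
      (forall k l, comm (Wp k) (G l) + comm (G k) (Wp l) = 0
                /\ comm (Wp k) (Gt l) + comm (Gt k) (Wp l) = 0) /\
      (forall k l, [/\ comm (G k) (G l) = 0, comm (Gt k) (Gt l) = 0 &
                       comm (Gt k) (G l) + comm (G k) (Gt l) = 0]).

From HB Require Import structures.
From mathcomp Require Import all_boot all_order all_algebra.
Import GRing.Theory.
Local Open Scope ring_scope.

(* The first relation of O_q expresses G_1 as G~_1 - (q + q^-1) [W_0, W_1]. Substituting
   this into [W_0, G_1]_q = [G~_1, W_0]_q, and using
   [X, T]_q - [T, X]_q = (q + q^-1) [X, T], leaves
   (q + q^-1) [W_0, G~_1] = (q + q^-1) [W_0, [W_0, W_1]]_q, and
   [W_0, [W_0, W_1]]_q = [W_0, [W_0, W_1]_q] holds in any algebra.  Since q is not a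
   root of unity, q^2 <> -1, so q + q^-1 can be cancelled.  The second identity is
   the mirror image, using [G_1, W_1]_q = [W_1, G~_1]_q. *)

Lemma addr_inv_neq0 {F : fieldType} (q : F) :
  q != 0 -> q ^+ 4 != 1 -> q + q^-1 != 0.
Proof.
move=> q_neq0 q4_neq1; apply: contra q4_neq1 => /eqP sum0.
have q2 : q ^+ 2 = -1.
  apply/eqP; rewrite -addr_eq0 -[1](divff q_neq0) expr2 -mulrDr.
  by rewrite sum0 mulr0.
by rewrite (exprM q 2 2) q2 sqrrN expr1n.
Qed.

Section QCommutators.

Variables (F : fieldType) (A : algType F) (q : F).
Implicit Types X Y T U : A.

Lemma qcommBr X T U : qcomm q X (T - U) = qcomm q X T - qcomm q X U.
Proof. by rewrite /qcomm mulrBr mulrBl !scalerBr opprD addrACA -opprD. Qed.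

Lemma qcommBl X T U : qcomm q (T - U) X = qcomm q T X - qcomm q U X.
Proof. by rewrite /qcomm mulrBr mulrBl !scalerBr opprD addrACA -opprD. Qed.

Lemma qcommZr a X U : qcomm q X (a *: U) = a *: qcomm q X U.
Proof.
by rewrite /qcomm -scalerAr -scalerAl !scalerA scalerBr !scalerA mulrC [q^-1 * a]mulrC.
Qed.

Lemma qcommZl a X U : qcomm q (a *: U) X = a *: qcomm q U X.
Proof.
by rewrite /qcomm -scalerAr -scalerAl !scalerA scalerBr !scalerA mulrC [q^-1 * a]mulrC.
Qed.

Lemma qcomm_sub_swap X Y : qcomm q X Y - qcomm q Y X = (q + q^-1) *: comm X Y.
Proof.
rewrite /qcomm /comm scalerDl !scalerBr opprB addrACA [RHS]addrACA.
by rewrite [- _ + - _]addrC.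
Qed.

Lemma qcomm_comm_l X Y : qcomm q X (comm X Y) = comm X (qcomm q X Y).
Proof.
rewrite /qcomm /comm !mulrBr !mulrBl -!scalerAl -!scalerAr !mulrA !scalerBr.
by rewrite opprD addrACA -opprD.
Qed.

Lemma qcomm_comm_r X Y : qcomm q (comm X Y) Y = comm (qcomm q X Y) Y.
Proof.
rewrite /qcomm /comm !mulrBr !mulrBl -!scalerAl -!scalerAr !mulrA !scalerBr.
by rewrite opprD addrACA -opprD.
Qed.

End QCommutators.
Section OqRelations.

Variables (F : fieldType) (q : F) (A : algType F) (Wm Wp G Gt : nat -> A).
Hypothesis hrel : Oq_relations q Wm Wp G Gt.
Hypothesis qinv_neq0 : q + q^-1 != 0.

Lemma Oq_G_def k : G k = Gt k - (q + q^-1) *: comm (Wm 0) (Wp k).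
Proof. by rewrite (hrel.1 k).1 scalerKV // opprB addrC subrK. Qed.

Lemma Oq_comm_W0_Gt1 :
  comm (Wm 0) (Gt 0) = comm (Wm 0) (qcomm q (Wm 0) (Wp 0)).
Proof.
have [eG eGt] := hrel.2.1 0.
have : qcomm q (Wm 0) (G 0) = qcomm q (Gt 0) (Wm 0) by rewrite eG eGt.
rewrite Oq_G_def qcommBr qcommZr => eq_qcomm.
apply: (scalerI qinv_neq0).
by rewrite -qcomm_sub_swap -eq_qcomm opprB addrC subrK qcomm_comm_l.
Qed.

Lemma Oq_comm_Gt1_W1 :
  comm (Gt 0) (Wp 0) = comm (qcomm q (Wm 0) (Wp 0)) (Wp 0).
Proof.
have [eG eGt] := hrel.2.2.1 0.
have : qcomm q (G 0) (Wp 0) = qcomm q (Wp 0) (Gt 0) by rewrite eG eGt.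
rewrite Oq_G_def qcommBl qcommZl => eq_qcomm.
apply: (scalerI qinv_neq0).
by rewrite -qcomm_sub_swap -eq_qcomm opprB addrC subrK qcomm_comm_r.
Qed.

End OqRelations.

Theorem lemma4p8 (F : fieldType) (q : F)
    (hq0 : q != 0) (hq : forall n : nat, (0 < n)%N -> q ^+ n != 1)
    (A : algType F) (Wm Wp G Gt : nat -> A)
    (hrel : Oq_relations q Wm Wp G Gt) :
  comm (Wm 0%N) (Gt 0%N) = comm (Wm 0%N) (qcomm q (Wm 0%N) (Wp 0%N)) /\
  comm (Gt 0%N) (Wp 0%N) = comm (qcomm q (Wm 0%N) (Wp 0%N)) (Wp 0%N).
Proof.
have qinv_neq0 := addr_inv_neq0 q hq0 (hq 4%N isT).
split; [exact: Oq_comm_W0_Gt1 hrel qinv_neq0 | exact: Oq_comm_Gt1_W1 hrel qinv_neq0].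
Qed.
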